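(* There exist a scalar product space $(\mathcal{V},g)$, skew-adjoint endomorphisms $J_1,\dots,J_m$ of $\mathcal{V}$ satisfying $J_iJ_j+J_jJ_i=2c_i\delta_{ij}\,\mathrm{id}$ ($1\le i,j\le m$) for some real $c_i$, and real numbers $\mu_0,\dots,\mu_m$, such that the (quasi-Clifford, hence Osserman) algebraic curvature tensor $R=\mu_0R^0+\sum_{i=1}^m\mu_iR^{J_i}$ is not Jacobi-dual.
   Context: A scalar product space is a finite-dimensional real vector space with a nondegenerate symmetric bilinear form $g$ (possibly indefinite); $\varepsilon_X=g(X,X)$, $X$ nonnull if $\varepsilon_X\ne0$. $R^0(X,Y,Z,W)=g(Y,Z)g(X,W)-g(X,Z)g(Y,W)$; for skew-adjoint $J$, $R^J(X,Y,Z,W)=g(JX,Z)g(JY,W)-g(JY,Z)g(JX,W)+2g(JX,Y)g(JZ,W)$. The Jacobi operator is $\mathcal{J}_X(Y)=\sum_{i}\varepsilon_{E_i}R(Y,X,X,E_i)E_i$ for an orthonormal basis $(E_i)$. An eigenvector of $\mathcal{J}_X$ is a nonzero $Y$ with $\mathcal{J}_X(Y)=\lambda Y$, $\lambda\in\mathbb{R}$. $R$ is Osserman if the characteristic polynomial of $\mathcal{J}_X$ is independent of unit timelike $X$ and of unit spacelike $X$. $R$ is Jacobi-dual if for all $X,Y$ with $X$ nonnull, $Y$ an eigenvector of $\mathcal{J}_X$ implies $X$ is an eigenvector of $\mathcal{J}_Y$. *)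

From mathcomp Require Import all_boot all_order all_algebra.
From mathcomp Require Import reals.
Set Implicit Arguments. Unset Strict Implicit. Unset Printing Implicit Defensive.
Import Order.TTheory GRing.Theory Num.Theory.
Local Open Scope ring_scope.

(* Scalar product space model: V = 'rV[R]_n, with the (possibly indefinite)
   form g_eps(x,y) = sum_i eps_i x_i y_i, eps_i in {1,-1}.  Every finite
   dimensional real scalar product space is isometric to one of these, and the
   standard basis (delta_mx 0 i) is an orthonormal basis with
   g(E_i,E_i) = eps_i. *)

Definition sign_vec (R : realType) (n : nat) (eps : 'I_n -> R) : Prop :=
  forall i, eps i = 1 \/ eps i = -1.

Definition gform (R : realType) (n : nat) (eps : 'I_n -> R)
  (x y : 'rV[R]_n) : R := \sum_(i < n) eps i * x 0 i * y 0 i.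

(* endomorphisms act on row vectors on the right: J x := x *m J *)
Definition skew_adjoint (R : realType) (n : nat) (eps : 'I_n -> R)
  (J : 'M[R]_n) : Prop :=
  forall x y : 'rV[R]_n, gform eps (x *m J) y = - gform eps x (y *m J).

Definition R0 (R : realType) (n : nat) (eps : 'I_n -> R)
  (X Y Z W : 'rV[R]_n) : R :=
  gform eps Y Z * gform eps X W - gform eps X Z * gform eps Y W.

Definition RJ (R : realType) (n : nat) (eps : 'I_n -> R) (J : 'M[R]_n)
  (X Y Z W : 'rV[R]_n) : R :=
  gform eps (X *m J) Z * gform eps (Y *m J) W
  - gform eps (Y *m J) Z * gform eps (X *m J) W
  + 2 * gform eps (X *m J) Y * gform eps (Z *m J) W.

Definition quasiClifford_curv (R : realType) (n m : nat) (eps : 'I_n -> R)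
  (mu0 : R) (mu : 'I_m -> R) (J : 'I_m -> 'M[R]_n)
  (X Y Z W : 'rV[R]_n) : R :=
  mu0 * R0 eps X Y Z W + \sum_(i < m) mu i * RJ eps (J i) X Y Z W.

Definition jacobi_op (R : realType) (n : nat) (eps : 'I_n -> R)
  (Rc : 'rV[R]_n -> 'rV[R]_n -> 'rV[R]_n -> 'rV[R]_n -> R)
  (X Y : 'rV[R]_n) : 'rV[R]_n :=
  \sum_(i < n) (gform eps (delta_mx 0 i) (delta_mx 0 i)
                 * Rc Y X X (delta_mx 0 i)) *: delta_mx 0 i.

Definition is_eigenvector (R : realType) (n : nat)
  (A : 'rV[R]_n -> 'rV[R]_n) (Y : 'rV[R]_n) : Prop :=
  Y != 0 /\ exists lam : R, A Y = lam *: Y.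

Definition jacobi_dual (R : realType) (n : nat) (eps : 'I_n -> R)
  (Rc : 'rV[R]_n -> 'rV[R]_n -> 'rV[R]_n -> 'rV[R]_n -> R) : Prop :=
  forall X Y : 'rV[R]_n, gform eps X X != 0 ->
    is_eigenvector (jacobi_op eps Rc X) Y ->
    is_eigenvector (jacobi_op eps Rc Y) X.

From mathcomp Require Import all_boot all_order all_algebra.
From mathcomp Require Import reals.
From mathcomp Require Import ring lra.
Set Implicit Arguments. Unset Strict Implicit. Unset Printing Implicit Defensive.
Import GRing.Theory Num.Theory.
Local Open Scope ring_scope.

(* For skew-adjoint J one has R^J(Y,X,X,W) = -3 g(Y,XJ) g(XJ,W), so the Jacobi
   operator of mu0 R^0 + sum_i mu_i R^{J_i} is
     J_X(Y) = mu0 (g(X,X) Y - g(Y,X) X) - 3 sum_i mu_i g(Y,XJ_i) XJ_i.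
   Take R = R^A - R^{A+B}, where A and B are rank-two skew operators
   x |-> g(x,a) b - g(x,b) a built from a totally isotropic 3-plane of R^{3,3}:
   all products of A and B vanish, so J_1 = A, J_2 = A + B satisfy the
   quasi-Clifford relations with c_i = 0.  If XB = 0 then J_X = 0, so every Y
   is an eigenvector of J_X, whereas J_Y(X) = 3 g(YA,X) YB, which is not a
   multiple of X for suitable X and Y. *)

Section ScalarProduct.
Variables (R : realType) (n : nat) (eps : 'I_n -> R).
Local Notation g := (gform eps).

Lemma gformC x y : g x y = g y x.
Proof. by apply: eq_bigr => i _; rewrite mulrAC. Qed.

Lemma gformDl x y z : g (x + y) z = g x z + g y z.
Proof.
by rewrite /gform -big_split; apply: eq_bigr => i _; rewrite !mxE mulrDr mulrDl.
Qed.

Lemma gformZl a x z : g (a *: x) z = a * g x z.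
Proof. by rewrite /gform mulr_sumr; apply: eq_bigr => i _; rewrite !mxE; ring. Qed.

Lemma gform0l z : g 0 z = 0.
Proof. by rewrite -(scale0r 0) gformZl mul0r. Qed.

Lemma gformNl x z : g (- x) z = - g x z.
Proof. by rewrite -scaleN1r gformZl mulN1r. Qed.

Lemma gform_suml I (r : seq I) (P : pred I) (F : I -> 'rV[R]_n) z :
  g (\sum_(i <- r | P i) F i) z = \sum_(i <- r | P i) g (F i) z.
Proof. by apply: (big_morph (g^~ z)) => [x y|]; rewrite ?gformDl ?gform0l. Qed.

Lemma gformDr x y z : g z (x + y) = g z x + g z y.
Proof. by rewrite gformC gformDl !(gformC z). Qed.

Lemma gform0r z : g z 0 = 0.
Proof. by rewrite gformC gform0l. Qed.

Lemma skew_adjointD A B :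
  skew_adjoint eps A -> skew_adjoint eps B -> skew_adjoint eps (A + B).
Proof.
by move=> skewA skewB x y; rewrite !mulmxDr gformDl gformDr skewA skewB opprD.
Qed.

Lemma gform_deltar x j : g x 'e_j = eps j * x 0 j.
Proof.
rewrite /gform (bigD1 j) //= big1 ?addr0 => [|k /negbTE k_neq_j].
  by rewrite mxE !eqxx mulr1.
by rewrite mxE k_neq_j andbF mulr0.
Qed.

Lemma gform_delta i j : g 'e_i 'e_j = eps j * (i == j)%:R.
Proof. by rewrite gform_deltar mxE eqxx eq_sym. Qed.

Lemma skew_adjoint_isotropic J x : skew_adjoint eps J -> g (x *m J) x = 0.
Proof. by move=> skewJ; have := skewJ x x; rewrite (gformC x); lra. Qed.

Lemma RJ_jacobiE J X Y W : skew_adjoint eps J ->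
  RJ eps J Y X X W = -3 * g Y (X *m J) * g (X *m J) W.
Proof.
move=> skewJ; rewrite /RJ skew_adjoint_isotropic // skewJ; ring.
Qed.

Hypothesis eps_sign : sign_vec eps.

Lemma row_orthonormal_expansion v : \sum_i (eps i * g v 'e_i) *: 'e_i = v.
Proof.
rewrite [RHS]row_sum_delta; apply: eq_bigr => i _; congr (_ *: _).
by rewrite gform_deltar mulrA; case: (eps_sign i) => ->; ring.
Qed.

Lemma jacobi_op_riesz Rc X Y T :
  (forall W, Rc Y X X W = g T W) -> jacobi_op eps Rc X Y = T.
Proof.
move=> RcE; rewrite /jacobi_op -[RHS]row_orthonormal_expansion.
by apply: eq_bigr => i _; rewrite gform_delta eqxx mulr1 RcE.
Qed.

Lemma jacobi_op_quasiClifford m mu0 (mu : 'I_m -> R) J X Y :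
  (forall i, skew_adjoint eps (J i)) ->
  jacobi_op eps (quasiClifford_curv eps mu0 mu J) X Y =
    mu0 *: (g X X *: Y - g Y X *: X)
    - 3 *: \sum_i (mu i * g Y (X *m J i)) *: (X *m J i).
Proof.
move=> skewJ; apply: jacobi_op_riesz => W.
rewrite /quasiClifford_curv /R0 gformDl gformNl !gformZl gformDl gformNl !gformZl.
congr (_ + _).
rewrite gform_suml mulr_sumr -sumrN; apply: eq_bigr => i _.
by rewrite RJ_jacobiE // gformZl; ring.
Qed.

End ScalarProduct.

Section Wedge.
Variables (R : realType) (n : nat) (eps : 'I_n -> R).
Local Notation g := (gform eps).

Definition wedge_mx (a b : 'rV[R]_n) : 'M[R]_n :=
  \col_i (eps i * a 0 i) *m b - \col_i (eps i * b 0 i) *m a.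

Lemma mulmx_gform_col (x a : 'rV[R]_n) :
  x *m \col_i (eps i * a 0 i) = (g x a)%:M.
Proof.
rewrite [LHS]mx11_scalar; congr (_%:M); rewrite !mxE.
by apply: eq_bigr => i _; rewrite !mxE; ring.
Qed.

Lemma mulmx_wedge x a b : x *m wedge_mx a b = g x a *: b - g x b *: a.
Proof. by rewrite mulmxBr !mulmxA !mulmx_gform_col !mul_scalar_mx. Qed.

Lemma wedge_skew a b : skew_adjoint eps (wedge_mx a b).
Proof.
move=> x y; rewrite (gformC _ x) !mulmx_wedge !(gformDl, gformNl, gformZl).
by rewrite (gformC _ b y) (gformC _ a y) (gformC _ x b) (gformC _ x a); ring.
Qed.

Lemma wedge_mulmx_eq0 a b c d :
  g a c = 0 -> g a d = 0 -> g b c = 0 -> g b d = 0 ->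
  wedge_mx a b *m wedge_mx c d = 0.
Proof.
move=> ac ad bc bd; apply/row_matrixP => i.
rewrite row0 row_mul rowE !mulmx_wedge !(gformDl, gformNl, gformZl).
by rewrite ac ad bc bd !mulr0 oppr0 addr0 !scale0r subr0.
Qed.

End Wedge.

Section DifferencePair.
Variables (R : realType) (n : nat) (eps : 'I_n -> R).
Hypothesis eps_sign : sign_vec eps.
Local Notation g := (gform eps).

Definition pair_ops (A B : 'M[R]_n) (i : 'I_2) : 'M[R]_n :=
  if i == ord0 then A else A + B.

Definition pair_weights (i : 'I_2) : R := if i == ord0 then 1 else -1.

Lemma pair_ops_skew A B : skew_adjoint eps A -> skew_adjoint eps B ->
  forall i, skew_adjoint eps (pair_ops A B i).
Proof.
by move=> skewA skewB i; rewrite /pair_ops; case: ifP => _; last apply: skew_adjointD.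
Qed.

Lemma pair_ops_mul_eq0 A B :
  A *m A = 0 -> A *m B = 0 -> B *m A = 0 -> B *m B = 0 ->
  forall i j, pair_ops A B i *m pair_ops A B j = 0.
Proof.
move=> AA AB BA BB i j; rewrite /pair_ops.
by case: ifP => _; case: ifP => _; rewrite ?mulmxDl ?mulmxDr ?AA ?AB ?BA ?BB ?addr0.
Qed.

Lemma jacobi_op_pair A B X Y :
  skew_adjoint eps A -> skew_adjoint eps B ->
  jacobi_op eps (quasiClifford_curv eps 0 pair_weights (pair_ops A B)) X Y =
    3 *: (g Y (X *m (A + B)) *: (X *m (A + B)) - g Y (X *m A) *: (X *m A)).
Proof.
move=> skewA skewB; rewrite jacobi_op_quasiClifford //; last exact: pair_ops_skew.
rewrite big_ord_recr big_ord1 /= /pair_weights /pair_ops /=.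
by apply/rowP => k; rewrite !mxE; ring.
Qed.

Lemma not_jacobi_dual_pair A B X Y :
  skew_adjoint eps A -> skew_adjoint eps B ->
  g X X != 0 -> X *m B = 0 -> g (Y *m A) X != 0 ->
  (forall lam, Y *m B != lam *: X) ->
  ~ jacobi_dual eps (quasiClifford_curv eps 0 pair_weights (pair_ops A B)).
Proof.
move=> skewA skewB nullX XB0 gYAX YB_nparallel dual.
have Y_neq0 : Y != 0 by apply: contraNneq gYAX => ->; rewrite mul0mx gform0l.
have JX_Y : jacobi_op eps (quasiClifford_curv eps 0 pair_weights (pair_ops A B))
    X Y = 0 *: Y.
  by rewrite jacobi_op_pair // mulmxDr XB0 addr0 subrr scaler0 scale0r.
have [_ [lam]] := dual X Y nullX (conj Y_neq0 (ex_intro _ 0 JX_Y)).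
have gXYB : g X (Y *m B) = 0 by rewrite gformC skewB XB0 gform0r oppr0.
rewrite jacobi_op_pair // mulmxDr gformDr gXYB addr0.
rewrite [_ *: (Y *m A + _)]scalerDr addrAC subrr add0r.
rewrite scalerA (gformC _ X) => JY_X.
have unit3 : 3 * g (Y *m A) X != 0 by rewrite mulf_neq0 ?pnatr_eq0.
move: (YB_nparallel (lam / (3 * g (Y *m A) X))).
by rewrite mulrC -scalerA -JY_X scalerA mulVf // scale1r eqxx.
Qed.

End DifferencePair.

Section SplitSignature.
Variables (R : realType) (p : nat).

Definition split_sign (i : 'I_(p + p)) : R := if split i is inl _ then 1 else -1.

Local Notation g := (gform split_sign).

Lemma split_sign_vec : sign_vec split_sign.
Proof. by move=> i; rewrite /split_sign; case: split => _; [left | right]. Qed.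

Lemma split_sign_lshift i : split_sign (lshift p i) = 1.
Proof. by rewrite /split_sign -[lshift p i]/(unsplit (inl i)) unsplitK. Qed.

Lemma split_sign_rshift i : split_sign (rshift p i) = -1.
Proof. by rewrite /split_sign -[rshift p i]/(unsplit (inr i)) unsplitK. Qed.

Definition null_vec (k : 'I_p) : 'rV[R]_(p + p) :=
  'e_(lshift p k) + 'e_(rshift p k).

Lemma gform_null_vec k l : g (null_vec k) (null_vec l) = 0.
Proof.
rewrite /null_vec !(gformDl, gformDr) !gform_delta.
rewrite split_sign_lshift split_sign_rshift.
by rewrite !eq_lshift !eq_rshift eq_lrshift eq_rlshift !mulr0n; ring.
Qed.

Lemma gform_lshift_null_vec i k : g 'e_(lshift p i) (null_vec k) = (i == k)%:R.
Proof.
rewrite /null_vec gformDr !gform_delta split_sign_lshift split_sign_rshift.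
by rewrite eq_lshift eq_lrshift mulr0n mulr0 addr0 mul1r.
Qed.

End SplitSignature.

Theorem mainTheorem3 (R : realType) :
  exists (n m : nat) (eps : 'I_n -> R) (J : 'I_m -> 'M[R]_n) (c : 'I_m -> R)
         (mu0 : R) (mu : 'I_m -> R),
    sign_vec eps /\
    (forall i, skew_adjoint eps (J i)) /\
    (forall i j : 'I_m,
        J i *m J j + J j *m J i = (2 * c i * (i == j)%:R)%:M) /\
    ~ jacobi_dual eps (quasiClifford_curv eps mu0 mu J).
Proof.
pose o0 := @Ordinal 3 0 isT; pose o1 := @Ordinal 3 1 isT; pose o2 := @Ordinal 3 2 isT.
pose eps := @split_sign R 3; pose e := @null_vec R 3.
pose A := wedge_mx eps (e o2) (e o0); pose B := wedge_mx eps (e o0) (e o1).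
pose X : 'rV[R]_(3 + 3) := 'e_(lshift 3 o2).
pose Y : 'rV[R]_(3 + 3) := 'e_(lshift 3 o0).
have wedge_null_mul k l k' l' :
    wedge_mx eps (e k) (e l) *m wedge_mx eps (e k') (e l') = 0.
  by rewrite wedge_mulmx_eq0 ?gform_null_vec.
exists (3 + 3)%N, 2%N, eps, (pair_ops A B), (fun _ => 0), 0, (pair_weights R).
split; first exact: split_sign_vec.
split; first exact: pair_ops_skew (wedge_skew _ _ _) (wedge_skew _ _ _).
split.
  have AB0 := pair_ops_mul_eq0 (wedge_null_mul o2 o0 o2 o0)
    (wedge_null_mul o2 o0 o0 o1) (wedge_null_mul o0 o1 o2 o0)
    (wedge_null_mul o0 o1 o0 o1).
  by move=> i j; rewrite !AB0 addr0 mulr0 mul0r raddf0.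
apply: (@not_jacobi_dual_pair _ _ _ (@split_sign_vec R 3) A B X Y
  (wedge_skew _ _ _) (wedge_skew _ _ _)).
- by rewrite gform_delta eqxx split_sign_lshift mulr1 oner_neq0.
- by rewrite mulmx_wedge !gform_lshift_null_vec /= !scale0r subr0.
- rewrite mulmx_wedge !gform_lshift_null_vec /= scale0r sub0r scale1r gformNl gformC.
  by rewrite gform_lshift_null_vec /= oppr_eq0 oner_neq0.
- rewrite mulmx_wedge !gform_lshift_null_vec /= scale1r scale0r subr0.
  move=> lam; apply/eqP => /rowP/(_ (lshift 3 o1)).
  by rewrite !mxE !eqxx eq_lrshift eq_lshift /= addr0 mulr0 => /eqP; rewrite oner_eq0.
Qed.
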